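(* Let $h:\mathbb{R}\to[0,+\infty)$ be a continuous multiplicative function (i.e. $h(xy)=h(x)h(y)$ for all $x,y\in\mathbb{R}$) such that $h(t)\ge t$ for all $t$, $h(0)=0$ and $h(1)=1$. Let $f:[a,b]\to\mathbb{R}$ be $h$-mid-convex, i.e. $$f\Big(\frac{x+y}{2}\Big)\le h\Big(\frac12\Big)\big(f(x)+f(y)\big)\quad\text{for all } x,y\in[a,b],$$ and suppose there is $M\in\mathbb{R}$ with $f(x)\le M$ for all $x\in[a,b]$. Then $f$ is continuous. *)

From Stdlib Require Import Reals.
Open Scope R_scope.

Definition multiplicative (h : R -> R) : Prop :=
  forall x y : R, h (x * y) = h x * h y.

Definition h_midconvex (h : R -> R) (a b : R) (f : R -> R) : Prop :=
  forall x y : R, a <= x <= b -> a <= y <= b ->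
    f ((x + y) / 2) <= h (1 / 2) * (f x + f y).

(** Since [h] is multiplicative with [h 1 = 1], [h 2 * h (1/2) = 1]; together with
    [h 2 >= 2] and [h (1/2) >= 1/2] this forces [h (1/2) = 1/2], so [f] is
    midpoint convex in the usual (Jensen) sense.  For such [f] bounded above by [M],
    an induction on [n] along the midpoints [x0 + u = (x0 + (x0 + 2u)) / 2] gives
    [f (x0 + u) - f x0 <= (M - f x0) / 2^n] whenever [|u| 2^n <= d] and
    [[x0 - d, x0 + d]] lies in [[a, b]]; midpoint convexity at [x0 = ((x0 + u) + (x0 - u)) / 2]
    turns this upper bound at [-u] into the matching lower bound at [u]
    (Bernstein-Doetsch). *)
From Stdlib Require Import Reals Lra.
Open Scope R_scope.

Lemma Rabs_le_inv (x y : R) : Rabs x <= y -> - y <= x <= y.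
Proof.
  intros x_le. pose proof (Rle_abs x). pose proof (Rle_abs (- x)).
  rewrite Rabs_Ropp in *. lra.
Qed.

Lemma multiplicative_half (h : R -> R) :
  multiplicative h -> h 1 = 1 -> (forall t : R, t <= h t) -> h (1 / 2) = / 2.
Proof.
  intros h_mul h1 h_ge.
  assert (h2_half : h 2 * h (1 / 2) = 1).
  { rewrite <- h_mul. replace (2 * (1 / 2)) with 1 by field. exact h1. }
  pose proof (h_ge 2). pose proof (h_ge (1 / 2)). nra.
Qed.

Lemma continuity_pt_of_dyadic_control (f : R -> R) (x0 K : R) :
  (forall n : nat, exists delta : R, 0 < delta /\
     forall x : R, Rabs (x - x0) < delta -> 2 ^ n * Rabs (f x - f x0) <= K) ->
  continuity_pt f x0.
Proof.
  intros control eps eps_pos.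
  destruct (Pow_x_infinity 2 ltac:(rewrite Rabs_right; lra) (K / eps + 1))
    as [n pow_large].
  specialize (pow_large n (Nat.le_refl n)).
  rewrite Rabs_right in pow_large by (apply Rle_ge, pow_le; lra).
  assert (K_lt : K < 2 ^ n * eps).
  { assert (K / eps * eps = K) by (field; lra). nra. }
  destruct (control n) as [delta [delta_pos close]].
  exists delta; split; [exact delta_pos|].
  intros x [_ x_near]. simpl in *. unfold R_dist in *.
  specialize (close x x_near).
  pose proof (pow_lt 2 n ltac:(lra)).
  nra.
Qed.

Section MidconvexBoundedAbove.

Variables (f : R -> R) (a b M : R).

Hypothesis f_midconvex : forall x y : R, a <= x <= b -> a <= y <= b ->
  f ((x + y) / 2) <= (f x + f y) / 2.

Hypothesis f_le_M : forall x : R, a <= x <= b -> f x <= M.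

Lemma midconvex_le_dyadic (x0 d : R) (n : nat) (u : R) :
  a <= x0 - d -> x0 + d <= b -> Rabs u * 2 ^ n <= d ->
  2 ^ n * (f (x0 + u) - f x0) <= M - f x0.
Proof.
  intros a_le b_ge.
  revert u; induction n as [|n IH]; intros u u_small; simpl pow in *.
  - rewrite Rmult_1_r in u_small.
    assert (a <= x0 + u <= b) by (apply Rabs_le_inv in u_small; lra).
    pose proof (f_le_M (x0 + u) ltac:(assumption)). lra.
  - pose proof (pow_le 2 n ltac:(lra)) as pow_nonneg.
    pose proof (pow_R1_Rle 2 n ltac:(lra)) as pow_ge1.
    assert (Rabs (2 * u) * 2 ^ n <= d) as u2_small
      by (rewrite Rabs_mult, (Rabs_right 2) by lra; lra).
    assert (Rabs (2 * u) <= d) as u2_le by (pose proof (Rabs_pos (2 * u)); nra).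
    apply Rabs_le_inv in u2_le.
    pose proof (f_midconvex x0 (x0 + 2 * u) ltac:(lra) ltac:(lra)) as mid.
    replace ((x0 + (x0 + 2 * u)) / 2) with (x0 + u) in mid by field.
    specialize (IH (2 * u) u2_small).
    nra.
Qed.

Lemma midconvex_reflect (x0 u : R) :
  a <= x0 + u <= b -> a <= x0 - u <= b ->
  f x0 - f (x0 - u) <= f (x0 + u) - f x0.
Proof.
  intros plus_in minus_in.
  pose proof (f_midconvex _ _ plus_in minus_in) as mid.
  replace ((x0 + u + (x0 - u)) / 2) with x0 in mid by field.
  lra.
Qed.

Lemma midconvex_dev_dyadic (x0 d : R) (n : nat) (u : R) :
  a <= x0 - d -> x0 + d <= b -> Rabs u * 2 ^ n <= d ->
  2 ^ n * Rabs (f (x0 + u) - f x0) <= M - f x0.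
Proof.
  intros a_le b_ge u_small.
  pose proof (pow_R1_Rle 2 n ltac:(lra)) as pow_ge1.
  assert (Rabs u <= d) as u_le by (pose proof (Rabs_pos u); nra).
  apply Rabs_le_inv in u_le.
  pose proof (midconvex_le_dyadic x0 d n u a_le b_ge u_small) as upper.
  pose proof (midconvex_le_dyadic x0 d n (- u) a_le b_ge
                ltac:(rewrite Rabs_Ropp; exact u_small)) as upper_opp.
  replace (x0 + - u) with (x0 - u) in upper_opp by ring.
  pose proof (midconvex_reflect x0 u ltac:(lra) ltac:(lra)) as reflect.
  unfold Rabs; destruct Rcase_abs; nra.
Qed.

Lemma midconvex_bounded_above_continuity_pt (x0 : R) :
  a < x0 < b -> continuity_pt f x0.
Proof.
  intros x0_in.
  set (d := Rmin (x0 - a) (b - x0)).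
  assert (0 < d) by (apply Rmin_glb_lt; lra).
  assert (a <= x0 - d) by (pose proof (Rmin_l (x0 - a) (b - x0)); unfold d; lra).
  assert (x0 + d <= b) by (pose proof (Rmin_r (x0 - a) (b - x0)); unfold d; lra).
  apply (continuity_pt_of_dyadic_control f x0 (M - f x0)).
  intros n.
  pose proof (pow_lt 2 n ltac:(lra)) as pow_pos.
  exists (d / 2 ^ n); split; [apply Rdiv_lt_0_compat; lra|].
  intros x x_near.
  replace x with (x0 + (x - x0)) by ring.
  apply (midconvex_dev_dyadic x0 d); [assumption|assumption|].
  assert (d / 2 ^ n * 2 ^ n = d) by (field; lra).
  nra.
Qed.

End MidconvexBoundedAbove.

Theorem lemma3p1 (h : R -> R) (a b M : R) (f : R -> R) :
  continuity h ->
  (forall t : R, 0 <= h t) ->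
  multiplicative h ->
  (forall t : R, t <= h t) ->
  h 0 = 0 -> h 1 = 1 ->
  h_midconvex h a b f ->
  (forall x : R, a <= x <= b -> f x <= M) ->
  forall x : R, a < x < b -> continuity_pt f x.
Proof.
  intros _ _ h_mul h_ge _ h1 f_hmid f_le_M.
  apply (midconvex_bounded_above_continuity_pt f a b M); [|exact f_le_M].
  intros x y x_in y_in.
  pose proof (f_hmid x y x_in y_in) as mid.
  rewrite (multiplicative_half h h_mul h1 h_ge) in mid.
  lra.
Qed.
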